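(* Let $\mathbf{P_0},\mathbf{P_1}$ be $n\times n$ transition probability matrices of irreducible and aperiodic Markov chains on $n$ states, let $\mathbf{P_t}=(1-t)\mathbf{P_0}+t\mathbf{P_1}$ for $t\in[0,1]$, and let $\pi_t$ be the stationary distribution of $\mathbf{P_t}$. Let $T\in\mathbb{N}$. Then for every integer $1\le k\le T$, $$\|\pi_0\mathbf{P_{1/T}}\mathbf{P_{2/T}}\cdots\mathbf{P_{k/T}}-\pi_{k/T}\|_{TV}\le\|\pi_{k/T}-\pi_0\|_{TV}+\frac{(k+1)^2}{2T}.$$
   Context: Distributions are row vectors; $\|\mu-\nu\|_{TV}=\frac12\|\mu-\nu\|_1$. *)

From HB Require Import structures.
From mathcomp Require Import all_boot all_order all_algebra.
From mathcomp Require Import reals.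
Set Implicit Arguments. Unset Strict Implicit. Unset Printing Implicit Defensive.
Import Order.TTheory GRing.Theory Num.Theory.
Local Open Scope ring_scope.

Fixpoint mxpow (R : realType) (n : nat) (P : 'M[R]_n) (m : nat) : 'M[R]_n :=
  match m with
  | 0%N => 1%:M
  | m'.+1 => mxpow P m' *m P
  end.

Definition stochastic (R : realType) (n : nat) (P : 'M[R]_n) : Prop :=
  (forall i j, 0 <= P i j) /\ (forall i, \sum_j P i j = 1).

Definition irreducible (R : realType) (n : nat) (P : 'M[R]_n) : Prop :=
  forall i j, exists m : nat, 0 < mxpow P m i j.

Definition aperiodic (R : realType) (n : nat) (P : 'M[R]_n) : Prop :=
  forall i, forall d : nat,
    (forall m : nat, (0 < m)%N -> 0 < mxpow P m i i -> (d %| m)%N) -> d = 1%N.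

Definition distribution (R : realType) (n : nat) (mu : 'rV[R]_n) : Prop :=
  (forall j, 0 <= mu 0 j) /\ \sum_j mu 0 j = 1.

Definition stationary (R : realType) (n : nat) (P : 'M[R]_n) (pi : 'rV[R]_n)
  : Prop := distribution pi /\ pi *m P = pi.

Definition tv (R : realType) (n : nat) (mu nu : 'rV[R]_n) : R :=
  2^-1 * \sum_j `|mu 0 j - nu 0 j|.

Definition interp (R : realType) (n : nat) (P0 P1 : 'M[R]_n) (t : R) : 'M[R]_n :=
  (1 - t) *: P0 + t *: P1.

Fixpoint chain (R : realType) (n : nat) (P0 P1 : 'M[R]_n) (T : nat)
  (mu : 'rV[R]_n) (k : nat) : 'rV[R]_n :=
  match k with
  | 0%N => mu
  | k'.+1 => chain P0 P1 T mu k' *m interp P0 P1 (k%:R / T%:R)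
  end.

From HB Require Import structures.
From mathcomp Require Import all_boot all_order all_algebra.
From mathcomp Require Import reals.
From mathcomp Require Import ring lra.
Import Order.TTheory GRing.Theory Num.Theory.
Local Open Scope ring_scope.

(* Write mu_j = pi_0 P_{1/T} ... P_{j/T}. Since pi_0 P_0 = pi_0, one step
   turns mu_j - pi_0 into (mu_j - pi_0) P_0 + t (mu_j P_1 - mu_j P_0) with
   t = (j+1)/T. Stochastic matrices do not increase the l1 norm, so the l1
   distance to pi_0 grows by at most 2t per step, giving
   ||mu_k - pi_0||_1 <= k(k+1)/T; the triangle inequality for TV distance
   concludes. *)

Definition l1 (R : numDomainType) (n : nat) (v : 'rV[R]_n) : R :=
  \sum_j `|v 0 j|.
Arguments l1 {R n}.

Section L1Norm.
Context {R : numDomainType} {n : nat}.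
Implicit Types (u v : 'rV[R]_n).

Lemma l1D u v : l1 (u + v) <= l1 u + l1 v.
Proof.
by rewrite /l1 -big_split /=; apply: ler_sum => j _; rewrite mxE ler_normD.
Qed.

Lemma l1N v : l1 (- v) = l1 v.
Proof. by apply: eq_bigr => j _; rewrite mxE normrN. Qed.

Lemma l1B u v : l1 (u - v) <= l1 u + l1 v.
Proof. by rewrite -(l1N v); apply: l1D. Qed.

Lemma l1Z (a : R) v : l1 (a *: v) = `|a| * l1 v.
Proof. by rewrite /l1 mulr_sumr; apply: eq_bigr => j _; rewrite mxE normrM. Qed.

Lemma l1_triangle u v w : l1 (u - w) <= l1 (u - v) + l1 (v - w).
Proof. by have := l1D (u - v) (v - w); rewrite addrA addrNK. Qed.

Lemma l1_distC u v : l1 (u - v) = l1 (v - u).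
Proof. by rewrite -l1N opprB. Qed.

End L1Norm.

Section Stochastic.
Context {R : realType} {n : nat}.
Implicit Types (P : 'M[R]_n) (v : 'rV[R]_n).

Lemma l1_distribution v : distribution v -> l1 v = 1.
Proof. by move=> [v_ge0 <-]; apply: eq_bigr => j _; rewrite ger0_norm. Qed.

Lemma l1_mulmx_stochastic v P : stochastic P -> l1 (v *m P) <= l1 v.
Proof.
move=> [P_ge0 P_sum].
apply: (@le_trans _ _ (\sum_j \sum_i `|v 0 i| * P i j)).
  apply: ler_sum => j _; rewrite mxE.
  apply: (le_trans (ler_norm_sum _ _ _)); apply: ler_sum => i _.
  by rewrite normrM (ger0_norm (P_ge0 i j)).
rewrite exchange_big; apply: ler_sum => i _.
by rewrite -mulr_sumr P_sum mulr1.
Qed.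

Lemma stochastic_interp P0 P1 (t : R) :
  stochastic P0 -> stochastic P1 -> 0 <= t <= 1 -> stochastic (interp P0 P1 t).
Proof.
move=> [P0_ge0 P0_sum] [P1_ge0 P1_sum] /andP[t_ge0 t_le1]; split.
  move=> i j; rewrite !mxE addr_ge0 ?mulr_ge0 //.
  by rewrite subr_ge0.
move=> i; rewrite (eq_bigr (fun j => (1 - t) * P0 i j + t * P1 i j)).
  by rewrite big_split /= -!mulr_sumr P0_sum P1_sum !mulr1 subrK.
by move=> j _; rewrite !mxE.
Qed.

Lemma interp0 P0 P1 : interp P0 P1 0 = P0.
Proof. by rewrite /interp subr0 scale1r scale0r addr0. Qed.

Lemma l1_interp_step {P0 P1} {t : R} v pi :
  stochastic P0 -> stochastic P1 -> 0 <= t <= 1 -> pi *m P0 = pi ->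
  l1 (v *m interp P0 P1 t - pi) <= l1 (v - pi) + t * (2 * l1 v).
Proof.
move=> sP0 sP1 /andP[t_ge0 _] pi_fixed.
have -> : v *m interp P0 P1 t - pi
          = (v - pi) *m P0 + t *: (v *m P1 - v *m P0).
  rewrite /interp mulmxDr -!scalemxAr mulmxBl pi_fixed scalerBl scale1r.
  rewrite scalerBr addrA [LHS]addrAC [RHS]addrAC; congr (_ + _).
  exact: addrAC.
apply: (le_trans (l1D _ _)); rewrite l1Z ger0_norm //.
apply: lerD; first exact: l1_mulmx_stochastic.
apply: ler_wpM2l => //; apply: (le_trans (l1B _ _)).
have := l1_mulmx_stochastic v P0 sP0; have := l1_mulmx_stochastic v P1 sP1; lra.
Qed.

End Stochastic.

Section TotalVariation.
Context {R : realType} {n : nat}.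

Lemma tv_l1 (u v : 'rV[R]_n) : tv u v = 2^-1 * l1 (u - v).
Proof. by congr (_ * _); apply: eq_bigr => j _; rewrite !mxE. Qed.

Lemma tvC (u v : 'rV[R]_n) : tv u v = tv v u.
Proof. by rewrite !tv_l1 l1_distC. Qed.

Lemma tv_triangle (u v w : 'rV[R]_n) : tv u w <= tv u v + tv v w.
Proof. by rewrite !tv_l1 -mulrDr ler_wpM2l ?invr_ge0 ?ler0n ?l1_triangle. Qed.

End TotalVariation.

Section InterpolatedChain.
Context {R : realType} {n : nat} {P0 P1 : 'M[R]_n} {T : nat}.
Hypotheses (sP0 : stochastic P0) (sP1 : stochastic P1).

Lemma ratio_unit_interval {j : nat} : (j <= T)%N -> 0 <= (j%:R / T%:R : R) <= 1.
Proof.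
move=> jT; rewrite divr_ge0 ?ler0n //=.
have [->|T_gt0] := posnP T; first by rewrite invr0 mulr0 ler01.
by rewrite ler_pdivrMr ?ltr0n // mul1r ler_nat.
Qed.

Lemma stochastic_chain_step (j : nat) : (j <= T)%N ->
  stochastic (interp P0 P1 (j%:R / T%:R)).
Proof. by move=> jT; apply: stochastic_interp => //; apply: ratio_unit_interval. Qed.

Lemma l1_chain_le (mu : 'rV[R]_n) (j : nat) :
  (j <= T)%N -> l1 (chain P0 P1 T mu j) <= l1 mu.
Proof.
elim: j => [//|j IHj] jT /=.
apply: le_trans (IHj (ltnW jT)).
exact/l1_mulmx_stochastic/stochastic_chain_step.
Qed.

Lemma l1_chain_drift (pi : 'rV[R]_n) (j : nat) : pi *m P0 = pi -> (j <= T)%N ->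
  l1 (chain P0 P1 T pi j - pi) <= l1 pi * ((j * j.+1)%:R / T%:R).
Proof.
move=> pi_fixed; elim: j => [|j IHj] jT /=.
  by rewrite subrr mul0n mul0r mulr0 /l1 big1 // => i _; rewrite mxE normr0.
apply: (le_trans (l1_interp_step _ _ sP0 sP1 (ratio_unit_interval jT) pi_fixed)).
have [t_ge0 _] := andP (ratio_unit_interval jT).
have l1_mu_le : 2 * l1 (chain P0 P1 T pi j) <= 2 * l1 pi.
  by rewrite ler_pM2l ?ltr0n // l1_chain_le // ltnW.
apply: (le_trans (lerD (IHj (ltnW jT)) (ler_wpM2l t_ge0 l1_mu_le))).
rewrite le_eqVlt; apply/orP; left; apply/eqP.
rewrite !natrM -[j.+2]addn1 -[j.+1]addn1 !natrD; ring.
Qed.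

End InterpolatedChain.

Theorem proposition3 (R : realType) (n : nat) (P0 P1 : 'M[R]_n)
  (pi : R -> 'rV[R]_n) (T : nat)
  (hP0 : stochastic P0) (hP1 : stochastic P1)
  (hirr0 : irreducible P0) (hirr1 : irreducible P1)
  (hap0 : aperiodic P0) (hap1 : aperiodic P1)
  (hpi : forall t : R, 0 <= t <= 1 -> stationary (interp P0 P1 t) (pi t)) :
  forall k : nat, (1 <= k <= T)%N ->
    tv (chain P0 P1 T (pi 0) k) (pi (k%:R / T%:R))
      <= tv (pi (k%:R / T%:R)) (pi 0) + (k.+1)%:R ^+ 2 / (2 * T%:R).
Proof.
move=> k /andP[k_ge1 kT].
have T_gt0 : 0 < T%:R :> R by rewrite ltr0n (leq_trans k_ge1 kT).
have [pi0_distr pi0_fixed] : stationary P0 (pi 0).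
  by rewrite -[P0](interp0 P0 P1); apply: hpi; rewrite lexx ler01.
have := l1_chain_drift hP0 hP1 (pi 0) k pi0_fixed kT.
rewrite (l1_distribution _ pi0_distr) mul1r => drift.
apply: (le_trans (tv_triangle _ (pi 0) _)).
rewrite [tv (pi 0) _]tvC addrC lerD // tv_l1.
have half_ge0 : 0 <= 2^-1 :> R by rewrite invr_ge0 ler0n.
apply: (le_trans (ler_wpM2l half_ge0 drift)).
have -> : 2^-1 * ((k * k.+1)%:R / T%:R) = (k * k.+1)%:R / (2 * T%:R) :> R.
  by field; rewrite gt_eqF.
rewrite ler_pM2r; last by rewrite invr_gt0 mulr_gt0.
by rewrite expr2 -natrM ler_nat leq_mul.
Qed.
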